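(* Let $K\ge 1$ and let $f\colon\mathbb{B}^2\to\mathbb{B}^2$ be a non-constant $K$-quasiregular mapping of the unit disk $\mathbb{B}^2=\{x\in\mathbb{R}^2:|x|<1\}$. Let $\rho=\rho_{\mathbb{B}^2}$ be the hyperbolic metric of $\mathbb{B}^2$, let $\lambda\ge 1$, and put $$W_\lambda(x,y)=\log\Big(1+2\lambda\sinh\frac{\rho(x,y)}{2}\Big),\qquad x,y\in\mathbb{B}^2.$$ Let $c(K)$ be the constant described in the context. Then for all $x,y\in\mathbb{B}^2$, $$W_\lambda(f(x),f(y))\le 2\lambda c(K)\max\big\{W_\lambda(x,y)^{1/K},\,W_\lambda(x,y)\big\}.$$
   Context: The hyperbolic metric of the unit disk is given by $\tanh\frac{\rho_{\mathbb{B}^2}(x,y)}{2}=\frac{|x-y|}{\sqrt{|x-y|^2+(1-|x|^2)(1-|y|^2)}}$; for a simply connected proper plane domain $G$ the hyperbolic metric $\rho_G$ is defined by transporting $\rho_{\mathbb{B}^2}$ via a Riemann map. The constant $c(K)$ (depending only on $K$) is the constant of the Schwarz lemma for quasiregular maps (Hariri–Klén–Vuorinen, Thm 16.39; Wang–Vuorinen, Thm 3.6): for all simply connected plane domains $G_1$ and every $K$-quasiregular map $f\colon G_1\to G_2=f(G_1)$ with $G_2$ simply connected, $\rho_{G_2}(f(x),f(y))\le c(K)\max\{\rho_{G_1}(x,y),\rho_{G_1}(x,y)^{1/K}\}$ for all $x,y\in G_1$; it satisfies $K\le c(K)\le \log\big(2(1+\sqrt{1-1/e^2})\big)(K-1)+K$.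 *)

From mathcomp Require Import all_boot all_order all_algebra.
From mathcomp Require Import all_classical all_reals all_analysis.
Set Implicit Arguments. Unset Strict Implicit. Unset Printing Implicit Defensive.
Import Order.TTheory GRing.Theory Num.Theory.
Import numFieldNormedType.Exports.
Local Open Scope classical_set_scope.
Local Open Scope ring_scope.

Section QRDefs.
Variable R : realType.

Definition sqnorm2 (x : R * R) : R := x.1 ^+ 2 + x.2 ^+ 2.

Definition unit_disk : set (R * R) := [set x | sqnorm2 x < 1].

Definition leb2 := (@lebesgue_measure R \x @lebesgue_measure R)%E.

Definition e1 : R * R := (1, 0).
Definition e2 : R * R := (0, 1).

(* C^infty functions R^2 -> R: phi lies in a family of everywhere
   (Frechet) differentiable functions closed under both partial derivatives. *)
Definition smooth2 (phi : R * R -> R) : Prop :=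
  exists S : set (R * R -> R), S phi /\
    forall psi, S psi ->
      (forall x, differentiable psi x) /\ S ('D_e1 psi) /\ S ('D_e2 psi).

Definition test_fun (G : set (R * R)) (phi : R * R -> R) : Prop :=
  smooth2 phi /\ compact (closure [set x | phi x != 0]) /\
  closure [set x | phi x != 0] `<=` G.

Definition L2loc (G : set (R * R)) (u : R * R -> R) : Prop :=
  measurable_fun G u /\
  forall C : set (R * R), compact C -> C `<=` G ->
    (\int[leb2]_(x in C) ((u x) ^+ 2)%:E < +oo)%E.

Definition weak_partial (G : set (R * R)) (v : R * R) (u g : R * R -> R) : Prop :=
  forall phi, test_fun G phi ->
    (\int[leb2]_(x in G) (u x * 'D_v phi x)%:E
      = - \int[leb2]_(x in G) (g x * phi x)%:E)%E.

Definition W12loc (G : set (R * R)) (u ux uy : R * R -> R) : Prop :=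
  [/\ L2loc G u, L2loc G ux, L2loc G uy,
      weak_partial G e1 u ux & weak_partial G e2 u uy].

(* K-quasiregular maps f : G -> R^2 (G open): f continuous on G,
   f = (u, v) in W^{1,2}_loc(G), and |f'(x)|^2 <= K J_f(x) for a.e. x in G,
   where f'(x) = [[ux uy];[vx vy]], |.| the operator norm, J_f = det f'. *)
Definition quasiregular (K : R) (G : set (R * R)) (f : R * R -> R * R) : Prop :=
  open G /\ {within G, continuous f} /\
  exists ux uy vx vy : R * R -> R,
    [/\ W12loc G (fun x => (f x).1) ux uy,
        W12loc G (fun x => (f x).2) vx vy &
        {ae leb2, forall x, G x ->
           forall h : R * R, sqnorm2 h = 1 ->
             sqnorm2 (ux x * h.1 + uy x * h.2, vx x * h.1 + vy x * h.2)
               <= K * (ux x * vy x - uy x * vx x)}].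

Definition artanh (t : R) : R := (ln ((1 + t) / (1 - t))) / 2.
Definition sinh (t : R) : R := (expR t - expR (- t)) / 2.

(* Hyperbolic metric of the unit disk:
   tanh (rho(x,y)/2) = |x-y| / sqrt(|x-y|^2 + (1-|x|^2)(1-|y|^2)). *)
Definition rhoB (x y : R * R) : R :=
  let d2 := sqnorm2 (x.1 - y.1, x.2 - y.2) in
  2 * artanh (Num.sqrt d2 / Num.sqrt (d2 + (1 - sqnorm2 x) * (1 - sqnorm2 y))).

Definition Wlam (lam : R) (x y : R * R) : R :=
  ln (1 + 2 * lam * sinh (rhoB x y / 2)).

End QRDefs.

From mathcomp Require Import all_boot all_order all_algebra.
From mathcomp Require Import all_classical all_reals all_analysis.
From mathcomp Require Import lra ring.
Set Implicit Arguments. Unset Strict Implicit.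
Import Order.TTheory GRing.Theory Num.Theory.
Import numFieldNormedType.Exports.
Local Open Scope classical_set_scope.
Local Open Scope ring_scope.

(* With s = rho(x,y), the elementary bounds s/2 <= W_lam(x,y) <= lam s turn the
   Schwarz lemma rho(f x, f y) <= c max(s, s^(1/K)) into the claim: W_lam(f x, f y)
   <= lam c max(s, s^(1/K)) <= lam c max(2W, (2W)^(1/K)) <= 2 lam c max(W, W^(1/K)).
   The upper bound combines ln(1 + 2 sinh u) <= 2u with ln(1 + lam z) <= lam ln(1 + z),
   an instance of the concavity of ln. *)

Section hyperbolic_bounds.
Variable R : realType.
Implicit Types (l p s u w z : R) (x y : R * R).

Lemma ln1DM_le l z : 1 <= l -> 0 <= z -> ln (1 + l * z) <= l * ln (1 + z).
Proof.
move=> l1 z0; have l0 : 0 < l by lra.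
have il1 : l^-1 <= 1 by rewrite invf_le1 //; lra.
have := @concave_ln R (Itv01 (eqbRL (invr_ge0 _) (ltW l0)) il1) (1 + l * z) 1
  ltac:(nra) ltr01.
rewrite !convRE /= ln1 mulr0 addr0.
have -> : l^-1 * (1 + l * z) + (1 - l^-1) * 1 = 1 + z.
  by rewrite mulrDr mulrA mulVf ?gt_eqF //; ring.
move=> concavity; rewrite -(ler_pM2l (x := l^-1)) ?invr_gt0 //.
by rewrite mulrA mulVf ?gt_eqF // mul1r.
Qed.

Lemma sinh_ge0 u : 0 <= u -> 0 <= sinh u.
Proof. by move=> u0; rewrite /sinh divr_ge0 // subr_ge0 ler_expR; lra. Qed.

Lemma ln1D2sinh_le u : 0 <= u -> ln (1 + 2 * sinh u) <= 2 * u.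
Proof.
move=> u0; set a := expR u.
have a1 : 1 <= a by rewrite /a -expR0 ler_expR.
have ia1 : a^-1 <= 1 by rewrite invf_le1 //; lra.
have -> : 1 + 2 * sinh u = 1 + a - a^-1.
  by rewrite /sinh expRN -/a; field; rewrite gt_eqF //; lra.
rewrite -ler_expR lnK ?posrE; last lra.
have -> : expR (2 * u) = a * a by rewrite -expRD /a; congr expR; ring.
rewrite -subr_ge0.
have -> : a * a - (1 + a - a^-1) = (a - 1) ^+ 2 * (a + 1) / a.
  by field; rewrite gt_eqF //; lra.
by rewrite divr_ge0 ?mulr_ge0 ?sqr_ge0 //; lra.
Qed.

Lemma le_ln1D2Msinh l u : 1 <= l -> 0 <= u -> u <= ln (1 + 2 * l * sinh u).
Proof.
move=> l1 u0; have sh0 := sinh_ge0 u0.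
have emu1 : expR (- u) <= 1 by rewrite -expR0 ler_expR; lra.
have eu : expR u <= 1 + 2 * sinh u by rewrite /sinh; lra.
by rewrite -[X in X <= _]expRK ler_ln ?posrE ?expR_gt0 //; nra.
Qed.

Lemma artanh_ge0 p : 0 <= p -> 0 <= artanh p.
Proof.
move=> p0; rewrite /artanh divr_ge0 //.
have [p1|p1] := ltP p 1.
  by rewrite ln_ge0 // ler_pdivlMr ?subr_gt0 //; lra.
(* for p >= 1, (1 + p) / (1 - p) <= 0 (division by 0 gives 0), where ln is 0 *)
rewrite ln0 // mulr_ge0_le0 //; first lra.
by rewrite invr_le0; lra.
Qed.

Lemma rhoB_ge0 x y : 0 <= rhoB x y.
Proof. by rewrite /rhoB mulr_ge0 // artanh_ge0 // divr_ge0 // sqrtr_ge0. Qed.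

Lemma Wlam_le_rhoB l x y : 1 <= l -> Wlam l x y <= l * rhoB x y.
Proof.
move=> l1; have u0 : 0 <= rhoB x y / 2 by have := rhoB_ge0 x y; lra.
rewrite /Wlam; set u := rhoB x y / 2 in u0 *.
have -> : 1 + 2 * l * sinh u = 1 + l * (2 * sinh u) by ring.
apply: (le_trans (ln1DM_le l1 _)); first by rewrite mulr_ge0 // sinh_ge0.
have -> : rhoB x y = 2 * u by rewrite /u; field.
by apply: ler_wpM2l; [lra | exact: ln1D2sinh_le].
Qed.

Lemma rhoB_le_Wlam l x y : 1 <= l -> rhoB x y <= 2 * Wlam l x y.
Proof.
move=> l1; have u0 : 0 <= rhoB x y / 2 by have := rhoB_ge0 x y; lra.
by have := le_ln1D2Msinh l1 u0; rewrite /Wlam; lra.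
Qed.

Lemma max_powR_le p s w : 0 <= p <= 1 -> 0 <= s <= 2 * w ->
  Num.max s (s `^ p) <= 2 * Num.max (w `^ p) w.
Proof.
move=> /andP[p0 p1] /andP[s0 s2w]; have w0 : 0 <= w by lra.
have spow : s `^ p <= 2 * w `^ p.
  apply: (le_trans (ge0_ler_powR p0 _ _ s2w)); rewrite ?nnegrE; try lra.
  rewrite powRM //; apply: ler_wpM2r; first exact: powR_ge0.
  by rewrite ler1_powR // ler1n.
have := le_max w (w `^ p) w; have := le_max (w `^ p) (w `^ p) w.
rewrite !lexx orbT => m1 m2; rewrite ge_max; apply/andP; split; lra.
Qed.

End hyperbolic_bounds.

Theorem theorem1p3 (R : realType) (K lam c : R) :
  1 <= K -> 1 <= lam ->
  (* properties of the Schwarz-lemma constant c = c(K) *)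
  K <= c ->
  c <= ln (2 * (1 + Num.sqrt (1 - (expR 2)^-1))) * (K - 1) + K ->
  (forall g : R * R -> R * R,
     quasiregular K (@unit_disk R) g ->
     (forall x, @unit_disk R x -> @unit_disk R (g x)) ->
     forall x y, @unit_disk R x -> @unit_disk R y ->
       rhoB (g x) (g y) <= c * Num.max (rhoB x y) (powR (rhoB x y) K^-1)) ->
  forall f : R * R -> R * R,
    quasiregular K (@unit_disk R) f ->
    (forall x, @unit_disk R x -> @unit_disk R (f x)) ->
    (exists x y, [/\ @unit_disk R x, @unit_disk R y & f x <> f y]) ->
    forall x y, @unit_disk R x -> @unit_disk R y ->
      Wlam lam (f x) (f y)
        <= 2 * lam * c * Num.max (powR (Wlam lam x y) K^-1) (Wlam lam x y).
Proof.
move=> K1 lam1 Kc _ schwarz f qf fD _ x y xD yD.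
have c0 : 0 <= c by lra.
have Kinv : 0 <= K^-1 <= 1 by rewrite invr_ge0 invf_le1 //; lra.
have rho_W : 0 <= rhoB x y <= 2 * Wlam lam x y.
  by rewrite rhoB_ge0 rhoB_le_Wlam.
have rho_f := schwarz f qf fD x y xD yD.
have max_le := ler_wpM2l c0 (max_powR_le Kinv rho_W).
apply: (le_trans (Wlam_le_rhoB _ _ lam1)).
set M := Num.max _ _; have -> : 2 * lam * c * M = lam * (c * (2 * M)) by ring.
by apply: ler_wpM2l; [lra | exact: le_trans rho_f max_le].
Qed.
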